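(* Let $H\in\mathbb R^{n\times n}$, $f\in\mathbb R^n$, $A\in\mathbb R^{m\times n}$, $b\in\mathbb R^m$, with $\mathcal X=\{x\in\mathbb R^n: Ax\le b\}$ nonempty and $H+H^\top$ positive definite. Let $x^*$ be the unique solution of the affine variational inequality: find $x\in\mathcal X$ with $(Hx+f)^\top(y-x)\ge 0$ for all $y\in\mathcal X$. Then the sequence $\{z_k\}$ generated by the DR-DAQP algorithm (described in the context) converges to $x^*$.
   Context: Notation: $A_i$, $b_i$ denote the $i$-th row of $A$ and entry of $b$; for an index set $\mathcal S$, $A_{\mathcal S}$, $b_{\mathcal S}$, $\lambda_{\mathcal S}$ denote the corresponding submatrix/subvectors. Fix $\rho>0$, set $H_s=\tfrac12(H+H^\top)$, $\tilde H=\rho I+H_s$, and for $z\in\mathbb R^n$ let $\tilde f(z)=f+(H-\tilde H)z$. For a parameter $z$, let $\mathrm{QP}(z)$ denote the strictly convex quadratic program $\min_x \tfrac12 x^\top\tilde Hx+\tilde f(z)^\top x$ subject to $Ax\le b$; its active set at the minimizer $y$ is $\{i: A_iy=b_i\}$. DR-DAQP algorithm: start from an initial $z_0\in\mathbb R^n$, set $\delta=\infty$, and let $\mathcal A_{-1}$ be undefined (so the test below fails at $k=0$). For $k=0,1,2,\dots$: 1. Let $y_k$ be the solution of $\mathrm{QP}(z_k)$ and $\mathcal A_k$ its active set. 2. If $\mathcal A_k=\mathcal A_{k-1}$: let $(\tilde z_k,\lambda_k)$ solve the linear system $\begin{bmatrix}H & A_{\mathcal A_k}^\top\\ A_{\mathcal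 A_k} & 0\end{bmatrix}\begin{bmatrix}x\\ \lambda\end{bmatrix}=\begin{bmatrix}-f\\ b_{\mathcal A_k}\end{bmatrix}$. If $\lambda_k\ge 0$ and $A\tilde z_k\le b$, stop and return $(\tilde z_k,\lambda_k)$. Otherwise, let $\tilde y_k$ be the solution of $\mathrm{QP}(\tilde z_k)$ and redefine $\mathcal A_k$ as its active set; if $\|\tilde y_k-\tilde z_k\|<\delta$, replace $y_k\leftarrow\tilde y_k$, $z_k\leftarrow\tilde z_k$, and set $\delta\leftarrow\|\tilde y_k-\tilde z_k\|$. 3. Set $z_{k+1}=(\rho I+H)^{-1}\big(\rho y_k+Hz_k+\tfrac{1}{2}H_s(y_k-z_k)\big)$. The algorithm iterates indefinitely unless it stops in step 2. *)

From HB Require Import structures.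
From mathcomp Require Import all_boot all_order all_algebra.
From mathcomp Require Import all_classical all_reals all_analysis.
Set Implicit Arguments. Unset Strict Implicit. Unset Printing Implicit Defensive.
Import Order.TTheory GRing.Theory Num.Theory.
Import numFieldNormedType.Exports.
Local Open Scope ring_scope.

Section DRDAQP.
Variables (R : realType) (n m : nat).
Notation vec := 'cV[R]_n.

Definition dotv (u v : vec) : R := (u^T *m v) 0 0.
Definition enorm (v : vec) : R := Num.sqrt (\sum_i (v i 0) ^+ 2).

Definition feas (A : 'M[R]_(m, n)) (b : 'cV[R]_m) (x : vec) : Prop :=
  forall i, (A *m x) i 0 <= b i 0.

Definition active (A : 'M[R]_(m, n)) (b : 'cV[R]_m) (y : vec) : {set 'I_m} :=
  [set i | (A *m y) i 0 == b i 0].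

Definition Hsym (H : 'M[R]_n) : 'M[R]_n := 2^-1 *: (H + H^T).
Definition Htil (rho : R) (H : 'M[R]_n) : 'M[R]_n := rho%:M + Hsym H.
Definition ftil (rho : R) (H : 'M[R]_n) (f z : vec) : vec :=
  f + (H - Htil rho H) *m z.

Definition qp_obj (rho : R) (H : 'M[R]_n) (f z x : vec) : R :=
  2^-1 * dotv x (Htil rho H *m x) + dotv (ftil rho H f z) x.
Definition qp_sol (rho : R) (H : 'M[R]_n) (f : vec) (A : 'M[R]_(m, n))
    (b : 'cV[R]_m) (z y : vec) : Prop :=
  feas A b y /\ forall x, feas A b x -> qp_obj rho H f z y <= qp_obj rho H f z x.

(* (x, lam) solves [H A_S^T; A_S 0] [x; lam_S] = [-f; b_S];
   lam is encoded as an m-vector vanishing outside S. *)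
Definition kkt_lin (H : 'M[R]_n) (f : vec) (A : 'M[R]_(m, n)) (b : 'cV[R]_m)
    (S : {set 'I_m}) (x : vec) (lam : 'cV[R]_m) : Prop :=
  [/\ (forall i, i \notin S -> lam i 0 = 0),
      H *m x + A^T *m lam = - f &
      (forall i, i \in S -> (A *m x) i 0 = b i 0)].

Definition stop_test (A : 'M[R]_(m, n)) (b : 'cV[R]_m) (S : {set 'I_m})
    (x : vec) (lam : 'cV[R]_m) : Prop :=
  (forall i, i \in S -> 0 <= lam i 0) /\ feas A b x.

(* delta in R U {+oo}: None = +oo *)
Definition lt_delta (x : R) (d : option R) : Prop :=
  match d with None => True | Some d' => x < d' end.

Definition next_z (rho : R) (H : 'M[R]_n) (y z : vec) : vec :=
  invmx (rho%:M + H) *m (rho *: y + H *m z + 2^-1 *: (Hsym H *m (y - z))).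

(* Inputs:  zk   = z_k from step 3 (or z_0),
            prev = Some A_{k-1} (final active set of iteration k-1), None at k=0,
            dk   = delta at the start of iteration k.
   Outputs: zf, yf = values of z_k, y_k after step 2 (used in step 3),
            Ak   = final A_k, dk' = delta after iteration k,
            (zt, lam) = the linear-system solution computed in step 2 (if any). *)
Definition iter_nostop (rho : R) (H : 'M[R]_n) (f : vec) (A : 'M[R]_(m, n))
    (b : 'cV[R]_m) (zk : vec) (prev : option {set 'I_m}) (dk : option R)
    (zf yf : vec) (Ak : {set 'I_m}) (dk' : option R) : Prop :=
  exists yk : vec, qp_sol rho H f A b zk yk /\
  if prev == Some (active A b yk) then
    exists (zt : vec) (lam : 'cV[R]_m) (yt : vec),
      [/\ kkt_lin H f A b (active A b yk) zt lam,
          ~ stop_test A b (active A b yk) zt lam,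
          qp_sol rho H f A b zt yt,
          Ak = active A b yt &
          (if `[< lt_delta (enorm (yt - zt)) dk >] then
             [/\ zf = zt, yf = yt & dk' = Some (enorm (yt - zt))]
           else [/\ zf = zk, yf = yk & dk' = dk])]
  else [/\ zf = zk, yf = yk, Ak = active A b yk & dk' = dk].

Definition iter_stop (rho : R) (H : 'M[R]_n) (f : vec) (A : 'M[R]_(m, n))
    (b : 'cV[R]_m) (zk : vec) (prev : option {set 'I_m})
    (zt : vec) (lam : 'cV[R]_m) : Prop :=
  exists yk : vec, [/\ qp_sol rho H f A b zk yk,
    prev = Some (active A b yk),
    kkt_lin H f A b (active A b yk) zt lam &
    stop_test A b (active A b yk) zt lam].

Definition drdaqp_prefix (rho : R) (H : 'M[R]_n) (f : vec) (A : 'M[R]_(m, n))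
    (b : 'cV[R]_m) (z0 : vec) (N : nat)
    (z zf yf : nat -> vec) (act : nat -> {set 'I_m}) (delta : nat -> option R)
    : Prop :=
  [/\ z 0%N = z0, delta 0%N = None &
      forall k, (k < N)%N ->
        iter_nostop rho H f A b (z k)
          (if k is k'.+1 then Some (act k') else None) (delta k)
          (zf k) (yf k) (act k) (delta k.+1)
        /\ z k.+1 = next_z rho H (yf k) (zf k)].

Definition drdaqp_run (rho : R) (H : 'M[R]_n) (f : vec) (A : 'M[R]_(m, n))
    (b : 'cV[R]_m) (z0 : vec)
    (z zf yf : nat -> vec) (act : nat -> {set 'I_m}) (delta : nat -> option R)
    : Prop :=
  forall N, drdaqp_prefix rho H f A b z0 N z zf yf act delta.

End DRDAQP.

From mathcomp Require Import all_boot all_order all_algebra.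
From mathcomp Require Import all_classical all_reals all_analysis.
From mathcomp Require Import ring lra.
Import Order.TTheory GRing.Theory Num.Theory.
Import numFieldNormedType.Exports.
Local Open Scope classical_set_scope.
Local Open Scope ring_scope.

Set Implicit Arguments.
Unset Strict Implicit.
Unset Printing Implicit Defensive.

(* Both the KKT system of a fixed active set (H is positive definite) and
   QP(z) (the matrix rho I + H_s is) have at most one solution, so every active
   set determines at most one candidate residual |y~ - z~|.  As delta strictly
   decreases whenever a candidate is accepted, the number of active sets whose
   candidate beats delta strictly drops at each acceptance: after finitely many
   iterations step 2 leaves z_k unchanged.  From then on step 3 reads
   M z_(k+1) = M z_k + G (y_k - z_k) with M = rho I + H and G = rho I + H_s / 2,
   and the optimality of y_k combined with the variational inequality at x*
   gives V(z_(k+1)) + e_k^T H_s e_k <= V(z_k), where e_k = z_k - x* and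
   V(z) = (z - x* )^T M^T G^-1 M (z - x* ).  Hence e_k^T H_s e_k tends to 0,
   which forces e_k --> 0 as H_s is positive definite.  If the algorithm stops,
   its KKT point with lam >= 0 solves the variational inequality, whose
   solution is unique. *)

Section InnerProduct.
Variables (R : realType) (n : nat).
Implicit Types (u v w : 'cV[R]_n) (Q : 'M[R]_n).

Lemma dotvE u v : dotv u v = \sum_i u i 0 * v i 0.
Proof. by rewrite /dotv mxE; apply: eq_bigr => i _; rewrite mxE. Qed.

Lemma dotvC u v : dotv u v = dotv v u.
Proof. by rewrite !dotvE; apply: eq_bigr => i _; rewrite mulrC. Qed.

Lemma dotvDr u v w : dotv u (v + w) = dotv u v + dotv u w.
Proof. by rewrite /dotv mulmxDr mxE. Qed.

Lemma dotvDl u v w : dotv (v + w) u = dotv v u + dotv w u.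
Proof. by rewrite dotvC dotvDr !(dotvC u). Qed.

Lemma dotvZr a u v : dotv u (a *: v) = a * dotv u v.
Proof. by rewrite /dotv -scalemxAr mxE. Qed.

Lemma dotvZl a u v : dotv (a *: v) u = a * dotv v u.
Proof. by rewrite dotvC dotvZr dotvC. Qed.

Lemma dotvNr u v : dotv u (- v) = - dotv u v.
Proof. by rewrite -scaleN1r dotvZr mulN1r. Qed.

Lemma dotvNl u v : dotv (- v) u = - dotv v u.
Proof. by rewrite dotvC dotvNr dotvC. Qed.

Lemma dotvBr u v w : dotv u (v - w) = dotv u v - dotv u w.
Proof. by rewrite dotvDr dotvNr. Qed.

Lemma dotvBl u v w : dotv (v - w) u = dotv v u - dotv w u.
Proof. by rewrite dotvDl dotvNl. Qed.

Lemma dotv0r u : dotv u 0 = 0.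
Proof. by rewrite /dotv mulmx0 mxE. Qed.

Lemma dotv0l u : dotv 0 u = 0.
Proof. by rewrite dotvC dotv0r. Qed.

Lemma dotv_trmx p (B : 'M[R]_(p, n)) u (v : 'cV[R]_p) :
  dotv u (B^T *m v) = dotv v (B *m u).
Proof.
have trmx11 (M : 'M[R]_1) : M 0 0 = M^T 0 0 by rewrite mxE.
by rewrite /dotv trmx11 !trmx_mul !trmxK mulmxA.
Qed.

Lemma dotv_trmxl p (B : 'M[R]_(p, n)) (u : 'cV[R]_p) v :
  dotv (B^T *m u) v = dotv u (B *m v).
Proof. by rewrite dotvC dotv_trmx. Qed.

Lemma dotv_ge0 u : 0 <= dotv u u.
Proof. by rewrite dotvE sumr_ge0 // => i _; rewrite -expr2 sqr_ge0. Qed.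

Lemma dotv_gt0 u : u != 0 -> 0 < dotv u u.
Proof.
move=> u0; rewrite lt0r dotv_ge0 andbT; apply: contra u0.
rewrite dotvE psumr_eq0 => [/allP u_eq0|i _]; last by rewrite -expr2 sqr_ge0.
apply/eqP/matrixP => i j; rewrite (ord1 j) mxE.
by have := u_eq0 i (mem_index_enum _); rewrite -expr2 sqrf_eq0 => /eqP.
Qed.

End InnerProduct.

(* A product M *m u in the left argument of dotv is not moved to the right:
   doing so on dotv (M *m u) (N *m v) would loop, so callers use dotvC. *)
Ltac dotv_expand :=
  repeat progress rewrite ?(mulmxDl, mulmxDr, mulmxBl, mulmxBr, mulmxN, mulNmx,
    mul_scalar_mx, dotvDl, dotvDr, dotvBl, dotvBr, dotvNl, dotvNr, dotvZl, dotvZr,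
    dotv0l, dotv0r, dotv_trmx, dotv_trmxl) -?scalemxAl -?scalemxAr.

Section PositiveDefinite.
Variables (R : realType) (n : nat).
Implicit Types (x y w c : 'cV[R]_n) (Q P : 'M[R]_n).

Definition psd Q : Prop := forall x, 0 <= dotv x (Q *m x).
Definition posdef Q : Prop := forall x, x != 0 -> 0 < dotv x (Q *m x).

Lemma posdef_psd Q : posdef Q -> psd Q.
Proof. by move=> Qpd x; case: (eqVneq x 0) => [->|/Qpd/ltW //]; rewrite dotv0l. Qed.

Lemma posdef_unitmx Q : posdef Q -> Q \in unitmx.
Proof.
move=> Qpd; rewrite unitmxE unitfE; apply/negP => /det0P [v v0 vQ].
have := Qpd v^T; rewrite trmx_eq0 => /(_ v0).
by rewrite /dotv trmxK mulmxA vQ mul0mx mxE ltxx.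
Qed.

Lemma posdef_scalar_mx a : 0 < a -> posdef a%:M.
Proof. by move=> a_gt0 x x0; dotv_expand; rewrite mulr_gt0 ?dotv_gt0. Qed.

Lemma posdefD Q P : posdef Q -> psd P -> posdef (Q + P).
Proof. by move=> Qpd Ppsd x x0; dotv_expand; rewrite ltr_wpDr ?Qpd. Qed.

Lemma psdZ a Q : 0 <= a -> psd Q -> psd (a *: Q).
Proof. by move=> a_ge0 Qpsd x; dotv_expand; rewrite mulr_ge0. Qed.

Lemma dotv_Hsym Q x : dotv x (Hsym Q *m x) = dotv x (Q *m x).
Proof. rewrite /Hsym; dotv_expand; rewrite (dotvC x); lra. Qed.

Lemma Hsym_tr Q : (Hsym Q)^T = Hsym Q.
Proof. by rewrite /Hsym linearZ /= linearD /= trmxK addrC. Qed.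

Lemma posdef_addtr Q : posdef (Q + Q^T) -> posdef Q.
Proof. by move=> Qpd x /Qpd; dotv_expand; lra. Qed.

Lemma affine_vi_uniq Q c x1 x2 : posdef Q ->
  0 <= dotv (Q *m x1 + c) (x2 - x1) -> 0 <= dotv (Q *m x2 + c) (x1 - x2) ->
  x1 = x2.
Proof.
move=> Qpd vi1 vi2; apply/eqP; rewrite -subr_eq0; apply/negP => /negP /Qpd.
by move: vi1 vi2; dotv_expand; rewrite !(dotvC (Q *m _)); lra.
Qed.

Definition quad Q c x : R := 2^-1 * dotv x (Q *m x) + dotv c x.

Lemma quad_line Q c y w t : Q^T = Q ->
  quad Q c (y + t *: w) = quad Q c y + t * dotv (Q *m y + c) w + 2^-1 * t^+2 * dotv w (Q *m w).
Proof.
move=> Qsym; rewrite /quad; dotv_expand.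
have -> : dotv y (Q *m w) = dotv w (Q *m y) by rewrite -{1}Qsym dotv_trmx.
rewrite (dotvC c w) (dotvC (Q *m y) w); lra.
Qed.

Lemma quad_min_vi Q c (C : 'cV[R]_n -> Prop) y : Q^T = Q -> psd Q ->
  (forall u v t, 0 <= t <= 1 -> C u -> C v -> C (u + t *: (v - u))) ->
  C y -> (forall x, C x -> quad Q c y <= quad Q c x) ->
  forall x, C x -> 0 <= dotv (Q *m y + c) (x - y).
Proof.
move=> Qsym Qpsd Cconv Cy ymin x Cx.
set w := x - y; set g := dotv (Q *m y + c) w; set D := dotv w (Q *m w).
have D_ge0 : 0 <= D := Qpsd w.
rewrite leNgt; apply/negP => g_lt0.
(* with this step, quad (y + t w) - quad y = t (1 + t) g / 2 < 0 *)
pose t := - g / (D - g).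
have Dg_gt0 : 0 < D - g by lra.
have t_gt0 : 0 < t by rewrite divr_gt0 ?oppr_gt0.
have t_le1 : t <= 1 by rewrite ler_pdivrMr // mul1r; lra.
have tD : t * D = t * g - g.
  have : t * (D - g) = - g by rewrite mulrVK ?unitfE ?gt_eqF.
  by rewrite mulrBr; lra.
have t01 : 0 <= t <= 1 by rewrite t_le1 ltW.
have := ymin _ (Cconv y x t t01 Cy Cx); rewrite quad_line // -/g -/D -addrA lerDl.
have -> : t * g + 2^-1 * t^+2 * D = 2^-1 * t * (1 + t) * g.
  by rewrite expr2 -mulrA -(mulrA t) tD; lra.
have : 0 < 2^-1 * t * (1 + t) by rewrite !mulr_gt0 ?invr_gt0 //; lra.
nra.
Qed.

Lemma coord_le_form Q : Q^T = Q -> posdef Q ->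
  exists C, 0 <= C /\ forall x i a, 0 < a ->
    2 * a * `|x i 0| <= a ^+ 2 * C + dotv x (Q *m x).
Proof.
move=> Qsym Qpd; have Qpsd := posdef_psd Qpd.
(* the coordinate x i 0 is the Q-inner product of x with w i *)
pose w i : 'cV[R]_n := invmx Q *m delta_mx i 0.
exists (\sum_i dotv (w i) (Q *m w i)); split => [|x i a a_gt0].
  by apply: sumr_ge0 => i _; apply: Qpsd.
have xi : x i 0 = dotv (w i) (Q *m x).
  by rewrite -{1}Qsym dotv_trmx /w mulKVmx ?posdef_unitmx // /dotv -colE !mxE.
have wQw : dotv (w i) (Q *m w i) <= \sum_i dotv (w i) (Q *m w i).
  by rewrite (bigD1 i) //= lerDl; apply: sumr_ge0 => j _; apply: Qpsd.
have wQx : dotv x (Q *m w i) = dotv (w i) (Q *m x) by rewrite -{1}Qsym dotv_trmx.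
have := Qpsd (a *: w i - x); have := Qpsd (a *: w i + x).
dotv_expand; rewrite wQx -xi => p1 p2.
have a2 : 0 <= a ^+ 2 by rewrite sqr_ge0.
have := ler_wpM2l a2 wQw; rewrite expr2 in a2 * => a2wQw.
by case: (lerP 0 (x i 0)) => [xi_ge0|xi_lt0];
  [rewrite ger0_norm // | rewrite ltr0_norm //]; nra.
Qed.

Lemma posdef_form_cvg0 Q (x : nat -> 'cV[R]_n) : Q^T = Q -> posdef Q ->
  (fun k => dotv (x k) (Q *m x k)) @ \oo --> 0 -> x @ \oo --> (0 : 'cV[R]_n).
Proof.
move=> Qsym Qpd /cvgr0Pnorm_lt qx0; have [C [C_ge0 xC]] := coord_le_form Qsym Qpd.
apply/cvgr0Pnorm_lt => eps eps_gt0.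
pose a := eps / (C + 1).
have a_gt0 : 0 < a by rewrite divr_gt0 //; lra.
have aC : a * C < eps by rewrite /a mulrAC ltr_pdivrMr; nra.
clearbody a.
near=> k; rewrite /Num.norm /= mx_normrE; apply: bigmax_lt => // -[i j] _ /=; rewrite (ord1 j).
have q_lt : `|dotv (x k) (Q *m x k)| < a * eps.
  by near: k; apply: qx0; rewrite mulr_gt0.
have := xC (x k) i a a_gt0; have := ler_norm (dotv (x k) (Q *m x k)).
have a2C : a ^+ 2 * C < a * eps by rewrite expr2 -mulrA ltr_pM2l.
rewrite -(ltr_pM2l (_ : 0 < 2 * a)) ?mulr_gt0 //; lra.
Unshelve. all: by end_near.
Qed.

End PositiveDefinite.

Lemma nat_nonincreasing_stationary (p : nat -> nat) :
  (forall k, p k.+1 <= p k)%N -> exists K, forall k, (K <= k)%N -> p k = p K.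
Proof.
move=> p_step.
have p_noninc : {homo p : i j / (i <= j)%N >-> (j <= i)%N}.
  by apply: (homo_leq (r := fun a b => b <= a)%N) => // a c d ca dc; apply: leq_trans dc ca.
have p_val : exists v, `[< exists K, p K = v >] by exists (p 0%N); apply/asboolP; exists 0%N.
case: (ex_minnP p_val) => v /asboolP [K pK] v_min; exists K => k Kk.
by apply/eqP; rewrite eqn_leq p_noninc // pK v_min //; apply/asboolP; exists k.
Qed.

Lemma descent_gap_cvg0 (R : realType) (W q : nat -> R) K :
  (forall k, 0 <= W k) -> (forall k, 0 <= q k) ->
  (forall k, (K <= k)%N -> W k.+1 + q k <= W k) -> q @ \oo --> 0.
Proof.
move=> W_ge0 q_ge0 Wq; rewrite -(cvg_shiftn K).
pose V k := W (k + K)%N.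
have Vq k : V k.+1 + q (k + K)%N <= V k by rewrite /V addSn Wq ?leq_addl.
have V_noninc : nonincreasing_seq V.
  by apply/nonincreasing_seqP => k; have := Vq k; have := q_ge0 (k + K)%N; lra.
have /cvg_ex [l Vl] : cvgn V.
  by apply: nonincreasing_is_cvgn V_noninc _; exists 0 => _ [k _ <-]; apply: W_ge0.
have gap0 : V - [sequence V k.+1]_k @ \oo --> 0.
  by rewrite -(subrr l); apply: cvgB => //; rewrite cvg_shiftS.
apply: (squeeze_cvgr (f := fun=> 0) _ (cvg_cst 0) gap0).
by near=> k; rewrite q_ge0 /= !fctE; have := Vq k; lra.
Unshelve. all: by end_near.
Qed.

Section Polyhedron.
Variables (R : realType) (n m : nat) (A : 'M[R]_(m, n)) (b : 'cV[R]_m).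
Implicit Types (H : 'M[R]_n) (f x y : 'cV[R]_n) (lam : 'cV[R]_m) (S : {set 'I_m}).

Lemma feas_convex u v t :
  0 <= t <= 1 -> feas A b u -> feas A b v -> feas A b (u + t *: (v - u)).
Proof.
move=> /andP[t_ge0 t_le1] Au Av i.
have -> : (A *m (u + t *: (v - u))) i 0 = (1 - t) * (A *m u) i 0 + t * (A *m v) i 0.
  by rewrite mulmxDr -scalemxAr mulmxBr !mxE; ring.
by have := Au i; have := Av i; nra.
Qed.

Lemma kkt_lin_dotvE H f S x lam y : kkt_lin H f A b S x lam ->
  dotv (H *m x + f) (y - x) = - \sum_(i in S) lam i 0 * ((A *m y) i 0 - b i 0).
Proof.
case=> lam_out Hx_eq Ax_eq.
have -> : H *m x + f = - (A^T *m lam) by rewrite -[f]opprK -Hx_eq opprD addrA subrr add0r.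
rewrite dotvNl dotvC dotv_trmx dotvE (bigID [in S]) /= [X in _ + X]big1 ?addr0.
  by congr (- _); apply: eq_bigr => i iS; rewrite mulmxBr -(Ax_eq i iS) !mxE.
by move=> i /lam_out ->; rewrite mul0r.
Qed.

Lemma kkt_stop_vi H f S x lam : kkt_lin H f A b S x lam -> stop_test A b S x lam ->
  forall y, feas A b y -> 0 <= dotv (H *m x + f) (y - x).
Proof.
move=> kkt [lam_ge0 _] y Ay; rewrite (kkt_lin_dotvE _ kkt) oppr_ge0.
by apply: sumr_le0 => i iS; rewrite mulr_ge0_le0 ?lam_ge0 // subr_le0.
Qed.

Lemma kkt_lin_uniq H f S x1 lam1 x2 lam2 : posdef H ->
  kkt_lin H f A b S x1 lam1 -> kkt_lin H f A b S x2 lam2 -> x1 = x2.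
Proof.
move=> Hpd kkt1 kkt2; apply: (affine_vi_uniq (c := f) Hpd).
  rewrite (kkt_lin_dotvE _ kkt1) big1 ?oppr0 // => i iS.
  by case: kkt2 => _ _ ->; rewrite // subrr mulr0.
rewrite (kkt_lin_dotvE _ kkt2) big1 ?oppr0 // => i iS.
by case: kkt1 => _ _ ->; rewrite // subrr mulr0.
Qed.

End Polyhedron.

Section DRDAQP.
Variables (R : realType) (n m : nat).
Variables (H : 'M[R]_n) (f : 'cV[R]_n) (A : 'M[R]_(m, n)) (b : 'cV[R]_m) (rho : R).
Hypothesis rho_gt0 : 0 < rho.
Hypothesis H_pd : posdef (H + H^T).

Lemma Hsym_pd : posdef (Hsym H).
Proof. by move=> x /(posdef_addtr H_pd); rewrite dotv_Hsym. Qed.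

Lemma Htil_tr : (Htil rho H)^T = Htil rho H.
Proof. by rewrite /Htil linearD /= tr_scalar_mx Hsym_tr. Qed.

Lemma Htil_pd : posdef (Htil rho H).
Proof. exact: posdefD (posdef_scalar_mx rho_gt0) (posdef_psd Hsym_pd). Qed.

Lemma qp_sol_vi z y : qp_sol rho H f A b z y ->
  forall x, feas A b x -> 0 <= dotv (Htil rho H *m y + ftil rho H f z) (x - y).
Proof.
case=> Ay; apply: (quad_min_vi Htil_tr (posdef_psd Htil_pd) _ Ay).
exact: feas_convex.
Qed.

Lemma qp_sol_uniq z y1 y2 :
  qp_sol rho H f A b z y1 -> qp_sol rho H f A b z y2 -> y1 = y2.
Proof.
move=> sol1 sol2; apply: (affine_vi_uniq (c := ftil rho H f z) Htil_pd).
  exact: qp_sol_vi sol1 _ sol2.1.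
exact: qp_sol_vi sol2 _ sol1.1.
Qed.

Definition Mrho : 'M[R]_n := rho%:M + H.
Definition Grho : 'M[R]_n := rho%:M + 2^-1 *: Hsym H.

Lemma Mrho_unit : Mrho \in unitmx.
Proof.
apply/posdef_unitmx/posdefD; first exact: posdef_scalar_mx.
exact/posdef_psd/posdef_addtr.
Qed.

Lemma Grho_pd : posdef Grho.
Proof.
apply: posdefD; first exact: posdef_scalar_mx.
by apply: psdZ; [rewrite invr_ge0 | exact: posdef_psd Hsym_pd].
Qed.

Lemma Grho_unit : Grho \in unitmx.
Proof. exact: posdef_unitmx Grho_pd. Qed.

Lemma Grho_tr : Grho^T = Grho.
Proof. by rewrite /Grho linearD linearZ /= tr_scalar_mx Hsym_tr. Qed.

Lemma next_z_shift xs z y :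
  Mrho *m (next_z rho H y z - xs) = Mrho *m (z - xs) + Grho *m (y - z).
Proof.
rewrite mulmxBr /next_z mulKVmx ?Mrho_unit // /Mrho /Grho.
rewrite !(mulmxDl, mulmxBr, mul_scalar_mx) -!scalemxAl.
by apply/matrixP => i j; rewrite !mxE; lra.
Qed.

Section Lyapunov.
Variable xs : 'cV[R]_n.
Hypothesis xs_feas : feas A b xs.
Hypothesis xs_vi : forall y, feas A b y -> 0 <= dotv (H *m xs + f) (y - xs).

Definition lyap_coord z := invmx Grho *m (Mrho *m (z - xs)).
Definition lyap z : R := dotv (lyap_coord z) (Grho *m lyap_coord z).

Lemma lyap_ge0 z : 0 <= lyap z.
Proof. exact: (posdef_psd Grho_pd (lyap_coord z)). Qed.

Lemma qp_sol_gap_le0 z y : qp_sol rho H f A b z y ->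
  dotv (Htil rho H *m (y - z) + H *m (z - xs)) (y - xs) <= 0.
Proof.
move=> sol; have := qp_sol_vi sol xs_feas; have := xs_vi sol.1.
rewrite /ftil; dotv_expand; rewrite !(dotvC f) !(dotvC (_ *m _)); lra.
Qed.

Lemma lyap_decrease z y : qp_sol rho H f A b z y ->
  lyap (next_z rho H y z) + dotv (z - xs) (Hsym H *m (z - xs)) <= lyap z.
Proof.
move=> sol.
have s_next : lyap_coord (next_z rho H y z) = lyap_coord z + (y - z).
  by rewrite /lyap_coord next_z_shift mulmxDr mulKmx ?Grho_unit.
have Gs : Grho *m lyap_coord z = Mrho *m (z - xs) by rewrite mulKVmx ?Grho_unit.
have := qp_sol_gap_le0 sol; rewrite -[y - xs](subrKA z) /lyap s_next.
move: (lyap_coord z) (z - xs) (y - z) Gs => s e d Gs gap.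
have Gsym : dotv s (Grho *m d) = dotv d (Grho *m s) by rewrite -{1}Grho_tr dotv_trmx.
rewrite mulmxDr dotvDl !dotvDr Gsym Gs.
have := posdef_psd H_pd (e + d); have := posdef_psd H_pd d.
have := mulr_ge0 (ltW rho_gt0) (dotv_ge0 d).
move: gap; rewrite /Mrho /Grho /Htil /Hsym; dotv_expand.
rewrite !(dotvC (_ *m _)) ?(dotvC d e) ?(dotvC s e) ?(dotvC s d).
lra.
Qed.

End Lyapunov.

Definition candidate_residual S v : Prop :=
  exists zt lam yt, [/\ kkt_lin H f A b S zt lam, qp_sol rho H f A b zt yt &
                        v = enorm (yt - zt)].

Lemma candidate_residual_uniq S v1 v2 :
  candidate_residual S v1 -> candidate_residual S v2 -> v1 = v2.
Proof.
move=> [z1 [l1 [y1 [kkt1 sol1 ->]]]] [z2 [l2 [y2 [kkt2 sol2 ->]]]].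
have ez := kkt_lin_uniq (posdef_addtr H_pd) kkt1 kkt2; subst z2.
by rewrite (qp_sol_uniq sol1 sol2).
Qed.

Definition improvable (d : option R) : {set {set 'I_m}} :=
  [set S | `[< exists2 v, candidate_residual S v & lt_delta v d >]].

Lemma improvable_shrink d S v : candidate_residual S v -> lt_delta v d ->
  (#|improvable (Some v)| < #|improvable d|)%N.
Proof.
move=> Sv vd; apply: proper_card; apply/properP; split.
  apply/fintype.subsetP => S'; rewrite !inE => -[u S'u uv].
  exists u => //; case: d vd => [d|] //= vd; exact: lt_trans uv vd.
exists S; rewrite !inE; first by exists v.
by apply/negP => /asboolP [u /(candidate_residual_uniq Sv) <-]; rewrite /= ltxx.
Qed.

Lemma iter_nostop_progress zk prev dk zf yf Ak dk' :
  iter_nostop rho H f A b zk prev dk zf yf Ak dk' ->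
  qp_sol rho H f A b zf yf /\
  (zf = zk /\ dk' = dk \/ (#|improvable dk'| < #|improvable dk|)%N).
Proof.
case=> yk [sol_k]; case: ifP => _; last by case=> -> -> _ ->; split; [|left].
case=> zt [lam [yt [kkt _ sol_t _]]].
case: asboolP => [lt_t [-> -> ->] | _ [-> -> ->]]; split => //; last by left.
by right; apply: (improvable_shrink (S := active A b yk)) lt_t; exists zt, lam, yt.
Qed.

Section Run.
Variables (z0 : 'cV[R]_n) (z zf yf : nat -> 'cV[R]_n).
Variables (act : nat -> {set 'I_m}) (delta : nat -> option R).
Hypothesis run : drdaqp_run rho H f A b z0 z zf yf act delta.

Lemma run_step k :
  iter_nostop rho H f A b (z k) (if k is k'.+1 then Some (act k') else None)
    (delta k) (zf k) (yf k) (act k) (delta k.+1) /\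
  z k.+1 = next_z rho H (yf k) (zf k).
Proof. by case: (run k.+1) => _ _; apply. Qed.

Lemma run_eventually_unreplaced : exists K, forall k, (K <= k)%N -> zf k = z k.
Proof.
pose p k := #|improvable (delta k)|.
have [K p_const] : exists K, forall k, (K <= k)%N -> p k = p K.
  apply: nat_nonincreasing_stationary => k.
  by rewrite /p; case: (iter_nostop_progress (run_step k).1) => _ [[_ ->] | /ltnW].
exists K => k Kk; case: (iter_nostop_progress (run_step k).1) => _ [[] // | ].
by rewrite -/(p k.+1) -/(p k) !p_const ?ltnn // leqW.
Qed.

Lemma run_cvg xs : feas A b xs ->
  (forall y, feas A b y -> 0 <= dotv (H *m xs + f) (y - xs)) -> z @ \oo --> xs.
Proof.
move=> xs_feas xs_vi; have [K zf_eq] := run_eventually_unreplaced.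
have gap0 : (fun k => dotv (z k - xs) (Hsym H *m (z k - xs))) @ \oo --> 0.
  apply: (descent_gap_cvg0 (K := K) (W := fun k => lyap xs (z k))) => [k|k|k Kk].
  - exact: lyap_ge0.
  - exact: posdef_psd Hsym_pd _.
  rewrite (run_step k).2 -(zf_eq k Kk).
  exact: (lyap_decrease xs_feas xs_vi (iter_nostop_progress (run_step k).1).1).
exact/subr_cvg0/(posdef_form_cvg0 (Hsym_tr H) Hsym_pd).
Qed.

End Run.
End DRDAQP.

Theorem theorem1 (R : realType) (n m : nat)
    (H : 'M[R]_n) (f : 'cV[R]_n) (A : 'M[R]_(m, n)) (b : 'cV[R]_m)
    (rho : R) (z0 xs : 'cV[R]_n) :
  0 < rho ->
  (exists x, feas A b x) ->
  (forall x : 'cV[R]_n, x != 0 -> 0 < dotv x ((H + H^T) *m x)) ->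
  feas A b xs ->
  (forall y, feas A b y -> 0 <= dotv (H *m xs + f) (y - xs)) ->
  (* infinite runs: z_k --> x* *)
  (forall (z zf yf : nat -> 'cV[R]_n) (act : nat -> {set 'I_m})
          (delta : nat -> option R),
      drdaqp_run rho H f A b z0 z zf yf act delta ->
      z @ \oo --> xs)
  /\
  (* finite runs: if the algorithm stops at iteration N, it returns x* *)
  (forall (N : nat) (z zf yf : nat -> 'cV[R]_n) (act : nat -> {set 'I_m})
          (delta : nat -> option R) (zt : 'cV[R]_n) (lam : 'cV[R]_m),
      drdaqp_prefix rho H f A b z0 N z zf yf act delta ->
      iter_stop rho H f A b (z N)
        (if N is N'.+1 then Some (act N') else None) zt lam ->
      zt = xs).
Proof.
move=> rho_gt0 _ H_pd xs_feas xs_vi; split=> [z zf yf act delta run | N z zf yf act delta zt lam _].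
  exact: (run_cvg rho_gt0 H_pd run xs_feas xs_vi).
case=> yk [_ _ kkt stop]; apply: (affine_vi_uniq (posdef_addtr H_pd)).
  exact: kkt_stop_vi kkt stop _ xs_feas.
exact: xs_vi stop.2.
Qed.
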